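(* If $k$ is $\vee$-irreducible in $\mathsf V$ (i.e. $k\le u\vee v$ implies $k\le u$ or $k\le v$), then for every $\mathsf V$-category $X$ the L-closure operator defines a topology on $X$ (whose closed sets are the $M$ with $\overline M=M$) such that every $\mathsf V$-functor becomes continuous. Hence L-closure defines a functor $L:\mathsf{Cat}(\mathsf V)\to\mathsf{Top}$.
   Context: Let $\mathsf V=(\mathsf V,\otimes,k)$ be a commutative unital quantale (complete lattice with commutative associative $\otimes$, neutral element $k$, $u\otimes(-)$ preserving suprema). A $\mathsf V$-category $(X,a)$ is a set with $a:X\times X\to\mathsf V$, $k\le a(x,x)$, $a(x,y)\otimes a(y,z)\le a(x,z)$; a $\mathsf V$-functor $f:(X,a)\to(Y,b)$ satisfies $a(x,y)\le b(f(x),f(y))$; $\mathsf{Cat}(\mathsf V)$ is the resulting category. For points, $u\cong v$ in $(Z,c)$ means $k\le c(u,v)$ and $k\le c(v,u)$. The L-closure of $M\subseteq X$ is $\overline M=\{x\in X\mid$ for all $\mathsf V$-functors $g,h:X\to Z$ with $g|_M=h|_M$ one has $g(x)\cong h(x)\}$. *)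

Record Quantale := {
  qcar :> Type;
  qle : qcar -> qcar -> Prop;
  qsup : (qcar -> Prop) -> qcar;
  qten : qcar -> qcar -> qcar;
  qk : qcar;
  qle_refl : forall u, qle u u;
  qle_trans : forall u v w, qle u v -> qle v w -> qle u w;
  qle_antisym : forall u v, qle u v -> qle v u -> u = v;
  qsup_ub : forall (S : qcar -> Prop) u, S u -> qle u (qsup S);
  qsup_least : forall (S : qcar -> Prop) w,
      (forall u, S u -> qle u w) -> qle (qsup S) w;
  qten_assoc : forall u v w, qten u (qten v w) = qten (qten u v) w;
  qten_comm : forall u v, qten u v = qten v u;
  qten_unit : forall u, qten qk u = u;
  qten_sup : forall u (S : qcar -> Prop),
      qten u (qsup S) = qsup (fun y => exists x, S x /\ y = qten u x)
}.

Arguments qle {_}.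
Arguments qsup {_}.
Arguments qten {_}.
Arguments qk {_}.

Definition qjoin {V : Quantale} (u v : V) : V := qsup (fun x => x = u \/ x = v).
Definition qbot (V : Quantale) : V := qsup (fun _ : V => False).

Definition k_join_irreducible (V : Quantale) : Prop :=
  ~ qle (@qk V) (qbot V) /\
  forall u v : V, qle qk (qjoin u v) -> qle qk u \/ qle qk v.

Record VCat (V : Quantale) := {
  vobj :> Type;
  vhom : vobj -> vobj -> V;
  vhom_refl : forall x, qle qk (vhom x x);
  vhom_trans : forall x y z, qle (qten (vhom x y) (vhom y z)) (vhom x z)
}.
Arguments vhom {_ _}.

Definition VFunctor {V : Quantale} (X Y : VCat V) (f : X -> Y) : Prop :=
  forall x y : X, qle (vhom x y) (vhom (f x) (f y)).

Definition viso {V : Quantale} {Z : VCat V} (u v : Z) : Prop :=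
  qle qk (vhom u v) /\ qle qk (vhom v u).

Definition Lclosure {V : Quantale} (X : VCat V) (M : X -> Prop) : X -> Prop :=
  fun x => forall (Z : VCat V) (g h : X -> Z),
    VFunctor X Z g -> VFunctor X Z h ->
    (forall m, M m -> g m = h m) -> viso (g x) (h x).

Definition Lclosed {V : Quantale} (X : VCat V) (M : X -> Prop) : Prop :=
  forall x, Lclosure X M x <-> M x.

Definition is_closed_sets_of_topology {T : Type} (C : (T -> Prop) -> Prop) : Prop :=
  C (fun _ => False) /\
  C (fun _ => True) /\
  (forall A B, C A -> C B -> C (fun x => A x \/ B x)) /\
  (forall (F : (T -> Prop) -> Prop), (forall A, F A -> C A) ->
       C (fun x => forall A, F A -> A x)).

Definition kuratowski {T : Type} (cl : (T -> Prop) -> (T -> Prop)) : Prop :=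
  (forall x, ~ cl (fun _ => False) x) /\
  (forall A x, A x -> cl A x) /\
  (forall A x, cl (cl A) x <-> cl A x) /\
  (forall A B x, cl (fun y => A y \/ B y) x <-> (cl A x \/ cl B x)).

(** The L-closure of [M] has an intrinsic description: [x] lies in it iff
    [k <= \/_{m in M} a(x,m) (x) a(m,x)].  Necessity is tested on the
    V-category obtained by gluing two copies of [X] along [M], where the hom
    between different copies is this join; the inclusion into one copy and
    the map switching the points outside [M] to the other copy agree on [M].
    From the description, extensiveness, monotonicity, idempotency and
    continuity of V-functors are routine, and the closure preserves binary
    unions and the empty set exactly because [k] is join-irreducible. *)

From Stdlib Require Import ClassicalEpsilon.

Section QuantaleFacts.
Variable V : Quantale.

Lemma qten_monor (u v w : V) : qle u v -> qle (qten w u) (qten w v).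
Proof.
  intro Huv.
  assert (Hjoin : qsup (fun x => x = u \/ x = v) = v).
  { apply qle_antisym.
    - apply qsup_least. intros z [-> | ->]; [exact Huv | apply qle_refl].
    - apply qsup_ub; auto. }
  rewrite <- Hjoin, qten_sup. apply qsup_ub. exists u; auto.
Qed.

Lemma qten_mono (u u' v v' : V) :
  qle u u' -> qle v v' -> qle (qten u v) (qten u' v').
Proof.
  intros Hu Hv. apply qle_trans with (qten u v'); [now apply qten_monor|].
  rewrite (qten_comm _ u), (qten_comm _ u'). now apply qten_monor.
Qed.

Lemma qten_sup_least (w c : V) (S : V -> Prop) :
  (forall x, S x -> qle (qten w x) c) -> qle (qten w (qsup S)) c.
Proof.
  intro H. rewrite qten_sup. apply qsup_least. intros y [x [Sx ->]]. auto.
Qed.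

Lemma qle_tenl (u v : V) : qle qk u -> qle v (qten u v).
Proof.
  intro Hu. rewrite <- (qten_unit V v) at 1. apply qten_mono; [exact Hu | apply qle_refl].
Qed.

Lemma qle_tenr (u v : V) : qle qk u -> qle v (qten v u).
Proof. intro Hu. rewrite qten_comm. now apply qle_tenl. Qed.

End QuantaleFacts.

Section Via.
Variables (V : Quantale) (X : VCat V).

Definition vhom_via (M : X -> Prop) (x y : X) : V :=
  qsup (fun z => exists m, M m /\ z = qten (vhom x m) (vhom m y)).

Lemma vhom_via_ub (M : X -> Prop) x y m :
  M m -> qle (qten (vhom x m) (vhom m y)) (vhom_via M x y).
Proof. intro Hm. apply qsup_ub. eauto. Qed.

Lemma vhom_via_le_vhom M x y : qle (vhom_via M x y) (vhom x y).
Proof. apply qsup_least. intros z [m [_ ->]]. apply vhom_trans. Qed.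

Lemma vhom_via_mono (A B : X -> Prop) x y :
  (forall z, A z -> B z) -> qle (vhom_via A x y) (vhom_via B x y).
Proof. intro HAB. apply qsup_least. intros w [m [Hm ->]]. apply vhom_via_ub; auto. Qed.

Lemma vhom_via_compl M x y z :
  qle (qten (vhom x y) (vhom_via M y z)) (vhom_via M x z).
Proof.
  apply qten_sup_least. intros w [m [Hm ->]].
  eapply qle_trans; [| apply (vhom_via_ub M x z m Hm)].
  rewrite qten_assoc. apply qten_mono; [apply vhom_trans | apply qle_refl].
Qed.

Lemma vhom_via_compr M x y z :
  qle (qten (vhom_via M x y) (vhom y z)) (vhom_via M x z).
Proof.
  rewrite qten_comm. apply qten_sup_least. intros w [m [Hm ->]].
  eapply qle_trans; [| apply (vhom_via_ub M x z m Hm)].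
  rewrite qten_comm, <- qten_assoc. apply qten_mono; [apply qle_refl | apply vhom_trans].
Qed.

Lemma qk_le_vhom_via M x m : M m -> qle qk (vhom x m) -> qle qk (vhom_via M x m).
Proof.
  intros Hm Hxm. eapply qle_trans; [exact Hxm|].
  eapply qle_trans; [| apply (vhom_via_ub M x m m Hm)]. apply qle_tenr, vhom_refl.
Qed.

Definition glued_hom (M : X -> Prop) (p q : X * bool) : V :=
  if Bool.eqb (snd p) (snd q) then vhom (fst p) (fst q) else vhom_via M (fst p) (fst q).

Lemma glued_hom_refl M p : qle qk (glued_hom M p p).
Proof. destruct p as [x []]; apply vhom_refl. Qed.

Lemma glued_hom_trans M p q r :
  qle (qten (glued_hom M p q) (glued_hom M q r)) (glued_hom M p r).
Proof.
  destruct p as [x []], q as [y []], r as [z []]; unfold glued_hom; simpl;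
  first [ apply vhom_trans | apply vhom_via_compl | apply vhom_via_compr
        | eapply qle_trans; [apply qten_mono; apply vhom_via_le_vhom | apply vhom_trans] ].
Qed.

Definition glued (M : X -> Prop) : VCat V :=
  {| vobj := X * bool; vhom := glued_hom M;
     vhom_refl := glued_hom_refl M; vhom_trans := glued_hom_trans M |}.

Definition glued_inl (M : X -> Prop) (x : X) : glued M := (x, false).

Definition glued_switch (M : X -> Prop) (x : X) : glued M :=
  (x, if excluded_middle_informative (M x) then false else true).

Lemma glued_inl_functor M : VFunctor X (glued M) (glued_inl M).
Proof. intros x y. apply qle_refl. Qed.

Lemma glued_switch_functor M : VFunctor X (glued M) (glued_switch M).
Proof.
  intros x y. unfold glued_switch; simpl; unfold glued_hom; simpl.
  destruct (excluded_middle_informative (M x)) as [Hx | Hx];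
  destruct (excluded_middle_informative (M y)) as [Hy | Hy]; simpl;
  try apply qle_refl.
  - eapply qle_trans; [| apply (vhom_via_ub M x y x Hx)]. apply qle_tenl, vhom_refl.
  - eapply qle_trans; [| apply (vhom_via_ub M x y y Hy)]. apply qle_tenr, vhom_refl.
Qed.

Lemma Lclosure_iff M x : Lclosure X M x <-> qle qk (vhom_via M x x).
Proof.
  split.
  - intro Hx.
    assert (Hagree : forall m, M m -> glued_inl M m = glued_switch M m).
    { intros m Hm. unfold glued_switch. now destruct (excluded_middle_informative (M m)). }
    destruct (Hx _ _ _ (glued_inl_functor M) (glued_switch_functor M) Hagree) as [Hk _].
    revert Hk. unfold glued_switch; simpl; unfold glued_hom; simpl.
    destruct (excluded_middle_informative (M x)) as [Mx | _]; simpl; [|auto].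
    intros Hxx. now apply qk_le_vhom_via.
  - intros Hk Z g h Hg Hh Hgh.
    split; eapply qle_trans; try exact Hk; apply qsup_least; intros w [m [Hm ->]].
    + eapply qle_trans; [apply qten_mono; [apply (Hg x m) | apply (Hh m x)]|].
      rewrite (Hgh m Hm). apply vhom_trans.
    + eapply qle_trans; [apply qten_mono; [apply (Hh x m) | apply (Hg m x)]|].
      rewrite <- (Hgh m Hm). apply vhom_trans.
Qed.

Lemma Lclosure_ext (M : X -> Prop) x : M x -> Lclosure X M x.
Proof. intros Mx Z g h _ _ Hgh. rewrite (Hgh x Mx). split; apply vhom_refl. Qed.

Lemma Lclosure_mono (A B : X -> Prop) x :
  (forall z, A z -> B z) -> Lclosure X A x -> Lclosure X B x.
Proof.
  rewrite !Lclosure_iff. intros HAB Hx.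
  eapply qle_trans; [exact Hx | now apply vhom_via_mono].
Qed.

Lemma Lclosure_idem (M : X -> Prop) x : Lclosure X (Lclosure X M) x -> Lclosure X M x.
Proof.
  rewrite !Lclosure_iff. intro Hx. eapply qle_trans; [exact Hx|].
  apply qsup_least. intros w [y [Hy ->]]. rewrite Lclosure_iff in Hy.
  eapply qle_trans; [| apply (vhom_via_compl M x y x)].
  apply qten_mono; [apply qle_refl|].
  eapply qle_trans; [| apply (vhom_via_compr M y y x)].
  now apply qle_tenl.
Qed.

Lemma Lclosure_empty x : ~ qle qk (qbot V) -> ~ Lclosure X (fun _ => False) x.
Proof.
  intros Hbot Hx. rewrite Lclosure_iff in Hx. apply Hbot.
  eapply qle_trans; [exact Hx|]. apply qsup_least. intros w [m [[] _]].
Qed.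

Lemma Lclosure_union (A B : X -> Prop) x :
  (forall u v : V, qle qk (qjoin u v) -> qle qk u \/ qle qk v) ->
  Lclosure X (fun y => A y \/ B y) x <-> Lclosure X A x \/ Lclosure X B x.
Proof.
  intro Hirr. split.
  - rewrite !Lclosure_iff. intro Hx. apply Hirr.
    eapply qle_trans; [exact Hx|]. apply qsup_least. intros w [m [[Hm | Hm] ->]].
    + eapply qle_trans; [apply (vhom_via_ub A x x m Hm) | apply qsup_ub; auto].
    + eapply qle_trans; [apply (vhom_via_ub B x x m Hm) | apply qsup_ub; auto].
  - intros [Hx | Hx]; eapply Lclosure_mono; try exact Hx; simpl; auto.
Qed.

End Via.

Lemma Lclosure_preimage V (X Y : VCat V) (f : X -> Y) (N : Y -> Prop) x :
  VFunctor X Y f -> Lclosure X (fun z => N (f z)) x -> Lclosure Y N (f x).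
Proof.
  rewrite !Lclosure_iff. intros Hf Hx.
  eapply qle_trans; [exact Hx|]. apply qsup_least. intros w [m [Hm ->]].
  eapply qle_trans; [| apply (vhom_via_ub V Y N (f x) (f x) (f m) Hm)].
  apply qten_mono; apply Hf.
Qed.

Lemma closed_sets_of_kuratowski {T : Type} (cl : (T -> Prop) -> (T -> Prop)) :
  kuratowski cl ->
  (forall A B x, (forall z, A z -> B z) -> cl A x -> cl B x) ->
  is_closed_sets_of_topology (fun M => forall x, cl M x <-> M x).
Proof.
  intros [Hempty [Hext [_ Hunion]]] Hmono.
  split; [| split; [| split]].
  - intro x. split; [apply Hempty | intros []].
  - intro x. split; auto.
  - intros A B HA HB x. rewrite Hunion, (HA x), (HB x). tauto.
  - intros F HF x. split; [| apply (Hext (fun y => forall A, F A -> A y))].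
    intros Hx A FA. apply (HF A FA). eapply Hmono; [| exact Hx]. intros z Hz. exact (Hz A FA).
Qed.

Theorem mainTheorem8 (V : Quantale) :
  k_join_irreducible V ->
  (forall X : VCat V,
      kuratowski (Lclosure X) /\
      is_closed_sets_of_topology (Lclosed X)) /\
  (forall (X Y : VCat V) (f : X -> Y), VFunctor X Y f ->
      forall N : Y -> Prop, Lclosed Y N -> Lclosed X (fun x => N (f x))).
Proof.
  intros [Hbot Hirr].
  assert (Hkur : forall X : VCat V, kuratowski (Lclosure X)).
  { intro X. split; [| split; [| split]].
    - intro x. now apply Lclosure_empty.
    - apply Lclosure_ext.
    - intros A x. split; [apply Lclosure_idem | apply Lclosure_ext].
    - intros A B x. now apply Lclosure_union. }
  split.
  - intro X. split; [apply Hkur|].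
    apply closed_sets_of_kuratowski; [apply Hkur | apply Lclosure_mono].
  - intros X Y f Hf N HN x. split; [| apply (Lclosure_ext V X (fun z => N (f z)))].
    intro Hx. apply HN. now apply Lclosure_preimage.
Qed.
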